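(* Let $B:[0,T]\to\mathbb R$ and $B_u:[0,T]\to\mathbb R$ be solutions of the constrained and unconstrained ODEs of the context, and let $\pi^\ast,\pi_u,\pi_M$ be as in the context. If $\rho=0$ or $\pi_M\in[\alpha,\beta]$, then $\pi^\ast(t)=\mathrm{Cap}(\pi_u(t),\alpha,\beta)$ for all $t\in[0,T]$.
   Context: Parameters: $T>0$; $\eta,\kappa,\sigma>0$; $\rho\in(-1,1)$; $b<1$, $b\ne0$; $K=[\alpha,\beta]$, $-\infty\le\alpha<\beta\le\infty$; $\delta_K(x)=-\alpha x\mathbf 1_{\{x>0\}}-\beta x\mathbf 1_{\{x<0\}}$. $B_-=\frac{(1-b)\alpha-\eta}\sigma$, $B_+=\frac{(1-b)\beta-\eta}\sigma$; $r_0=-\frac b{2(1-b)}\eta^2$, $r_1=\frac b{1-b}\eta\sigma\rho-\kappa$, $r_2=\sigma^2(1+\frac b{1-b}\rho^2)$. Constrained ODE: $B'(\tau)=-\kappa B+\frac12\sigma^2B^2+\frac12\frac b{1-b}\inf_{\lambda\in\mathbb R}(2(1-b)\delta_K(\lambda)+(\eta+\lambda+\sigma\rho B)^2)$, $B(0)=0$. Unconstrained ODE: $B_u'(\tau)=-r_0+r_1B_u+\frac12r_2B_u^2$, $B_u(0)=0$. $\lambda^\ast(B)=[(1-b)\alpha-(\eta+\sigma\rho B)]\mathbf 1_{\{\rho B<B_-\}}+[(1-b)\beta-(\eta+\sigma\rho B)]\mathbf 1_{\{\rho B>B_+\}}$; $\pi^\ast(t)=\frac1{1-b}(\eta+\lambda^\ast(B(T-t))+\sigma\rho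 B(T-t))$; $\pi_u(t)=\frac1{1-b}(\eta+\sigma\rho B_u(T-t))$; $\pi_M=\frac\eta{1-b}$; $\mathrm{Cap}(x,\alpha,\beta)=\alpha$ if $x<\alpha$, $x$ if $\alpha\le x\le\beta$, $\beta$ if $x>\beta$. *)

From Stdlib Require Import Reals.
From Coquelicot Require Import Coquelicot.
Open Scope R_scope.

Definition deltaK (alpha beta : Rbar) (x : R) : Rbar :=
  Rbar_plus
    (if Rlt_dec 0 x then Rbar_mult (Rbar_opp alpha) (Finite x) else Finite 0)
    (if Rlt_dec x 0 then Rbar_mult (Rbar_opp beta) (Finite x) else Finite 0).

Definition objK (eta sigma rho b : R) (alpha beta : Rbar) (B l : R) : Rbar :=
  Rbar_plus (Rbar_mult (Finite (2 * (1 - b))) (deltaK alpha beta l))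
            (Finite ((eta + l + sigma * rho * B) ^ 2)).

Definition infK (eta sigma rho b : R) (alpha beta : Rbar) (B : R) : Rbar :=
  Rbar_glb (fun y => exists l : R, y = objK eta sigma rho b alpha beta B l).

Definition rhsK (eta kappa sigma rho b : R) (alpha beta : Rbar) (B : R) : R :=
  - kappa * B + / 2 * sigma ^ 2 * B ^ 2
  + / 2 * (b / (1 - b)) * real (infK eta sigma rho b alpha beta B).

Definition r0 (eta b : R) : R := - (b / (2 * (1 - b))) * eta ^ 2.
Definition r1 (eta kappa sigma rho b : R) : R := b / (1 - b) * eta * sigma * rho - kappa.
Definition r2 (sigma rho b : R) : R := sigma ^ 2 * (1 + b / (1 - b) * rho ^ 2).

Definition rhsU (eta kappa sigma rho b : R) (Bu : R) : R :=
  - r0 eta b + r1 eta kappa sigma rho b * Bu + / 2 * r2 sigma rho b * Bu ^ 2.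

Definition solves_ODE (T : R) (F : R -> R) (f : R -> R) : Prop :=
  f 0 = 0 /\
  continuous_on (fun tau => 0 <= tau <= T) f /\
  (forall tau, 0 < tau < T -> is_derive f tau (F (f tau))).

Definition Bminus (eta sigma b : R) (alpha : Rbar) : Rbar :=
  Rbar_mult (Rbar_minus (Rbar_mult (Finite (1 - b)) alpha) (Finite eta)) (Finite (/ sigma)).
Definition Bplus (eta sigma b : R) (beta : Rbar) : Rbar :=
  Rbar_mult (Rbar_minus (Rbar_mult (Finite (1 - b)) beta) (Finite eta)) (Finite (/ sigma)).

(* lambda^*(B); when an indicator is 1 the corresponding bound is finite *)
Definition lambda_star (eta sigma rho b : R) (alpha beta : Rbar) (B : R) : R :=
  (if Rbar_lt_dec (Finite (rho * B)) (Bminus eta sigma b alpha)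
   then (1 - b) * real alpha - (eta + sigma * rho * B) else 0)
  + (if Rbar_lt_dec (Bplus eta sigma b beta) (Finite (rho * B))
     then (1 - b) * real beta - (eta + sigma * rho * B) else 0).

Definition pi_star (T eta sigma rho b : R) (alpha beta : Rbar) (B : R -> R) (t : R) : R :=
  / (1 - b) * (eta + lambda_star eta sigma rho b alpha beta (B (T - t))
               + sigma * rho * B (T - t)).

Definition pi_u (T eta sigma rho b : R) (Bu : R -> R) (t : R) : R :=
  / (1 - b) * (eta + sigma * rho * Bu (T - t)).

Definition pi_M (eta b : R) : R := eta / (1 - b).

Definition Cap (x : R) (alpha beta : Rbar) : R :=
  if Rbar_lt_dec (Finite x) alpha then real alpha
  else if Rbar_lt_dec beta (Finite x) then real beta
  else x.

From Stdlib Require Import Reals Lra Psatz Classical.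
From Coquelicot Require Import Coquelicot.
Open Scope R_scope.

(* In the price variable y = pi_M + sigma rho / (1 - b) B, [lambda_star] turns pi* into the
   projection Cap of the price of B onto K, and the infimum in the constrained ODE is attained at
   that projection, so the constrained field is the unconstrained (quadratic) one minus the
   penalty sigma rho b / 2 (y - Cap y)^2, which vanishes on K.  If rho = 0 both prices equal pi_M.
   Otherwise both price paths start at pi_M in K and, by Gronwall, coincide as long as the
   constrained one stays in K.  If it leaves K at time m from e = y(m), the common field at e is
   nonzero: otherwise e is an equilibrium and backward uniqueness forces pi_M = e, where the field
   is sigma rho b eta^2 / (2 (1 - b)^2) <> 0.  A nonzero field at e is a barrier that neither path
   crosses back, so e is an end point of K and both prices are capped to e from then on. *)

Definition in_K (alpha beta : Rbar) (x : R) : Prop :=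
  Rbar_le alpha x /\ Rbar_le x beta.

Lemma Rbar_mult_pos_r (x : Rbar) (c : R) : 0 < c ->
  Rbar_mult x c = match x with Finite r => Finite (r * c) | _ => x end.
Proof.
  intros Hc; destruct x as [r| |]; [reflexivity| |];
    unfold Rbar_mult, Rbar_mult'; destruct Rle_dec;
    try destruct Rle_lt_or_eq_dec; auto; lra.
Qed.

Lemma Rbar_mult_neg_r (x : Rbar) (c : R) : c < 0 ->
  Rbar_mult x c = match x with Finite r => Finite (r * c) | _ => Rbar_opp x end.
Proof.
  intros Hc; destruct x as [r| |]; [reflexivity| |];
    unfold Rbar_mult, Rbar_mult'; destruct Rle_dec;
    try destruct Rle_lt_or_eq_dec; auto; lra.
Qed.

Lemma lt_Bminus_iff (eta sigma b : R) (x : Rbar) (z : R) : 0 < sigma -> b < 1 ->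
  Rbar_lt z (Bminus eta sigma b x) <-> Rbar_lt ((eta + sigma * z) / (1 - b)) x.
Proof.
  intros Hs Hb; unfold Bminus.
  rewrite (Rbar_mult_comm (Finite (1 - b))), (Rbar_mult_pos_r x) by lra.
  destruct x as [a| |]; cbn -[Rbar_mult];
    rewrite Rbar_mult_pos_r by (apply Rinv_0_lt_compat; lra); cbn; try tauto.
  assert (E : (a * (1 - b) + - eta) * / sigma - z
              = (1 - b) / sigma * (a - (eta + sigma * z) / (1 - b))) by (field; lra).
  assert (0 < (1 - b) / sigma) by (apply Rdiv_lt_0_compat; lra).
  split; intros; nra.
Qed.

Lemma Bplus_lt_iff (eta sigma b : R) (x : Rbar) (z : R) : 0 < sigma -> b < 1 ->
  Rbar_lt (Bplus eta sigma b x) z <-> Rbar_lt x ((eta + sigma * z) / (1 - b)).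
Proof.
  intros Hs Hb; unfold Bplus.
  rewrite (Rbar_mult_comm (Finite (1 - b))), (Rbar_mult_pos_r x) by lra.
  destruct x as [a| |]; cbn -[Rbar_mult];
    rewrite Rbar_mult_pos_r by (apply Rinv_0_lt_compat; lra); cbn; try tauto.
  assert (E : (a * (1 - b) + - eta) * / sigma - z
              = (1 - b) / sigma * (a - (eta + sigma * z) / (1 - b))) by (field; lra).
  assert (0 < (1 - b) / sigma) by (apply Rdiv_lt_0_compat; lra).
  split; intros; nra.
Qed.

Lemma Cap_cases (x : R) (alpha beta : Rbar) : Rbar_lt alpha beta ->
  (Rbar_lt x alpha /\ alpha = Cap x alpha beta) \/
  (Rbar_lt beta x /\ beta = Cap x alpha beta) \/
  (in_K alpha beta x /\ Cap x alpha beta = x).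
Proof.
  intros Hab; unfold Cap, in_K.
  destruct (Rbar_lt_dec x alpha) as [H1|H1];
    [|destruct (Rbar_lt_dec beta x) as [H2|H2]];
    destruct alpha as [a| |]; destruct beta as [c| |]; cbn in *; try tauto; lra.
Qed.

Lemma Cap_id (x : R) (alpha beta : Rbar) : in_K alpha beta x -> Cap x alpha beta = x.
Proof.
  intros [H1 H2]; unfold Cap.
  destruct (Rbar_lt_dec x alpha) as [H3|H3]; [now apply Rbar_lt_not_le in H3|].
  destruct (Rbar_lt_dec beta x) as [H4|H4]; [now apply Rbar_lt_not_le in H4|].
  reflexivity.
Qed.

Lemma Cap_in_K (x : R) (alpha beta : Rbar) : Rbar_lt alpha beta ->
  in_K alpha beta (Cap x alpha beta).
Proof.
  intros Hab.
  destruct (Cap_cases x alpha beta Hab) as [[_ E]|[[_ E]|[HK ->]]];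
    [unfold in_K; rewrite <- E|unfold in_K; rewrite <- E|exact HK];
    auto using Rbar_le_refl, Rbar_lt_le.
Qed.

Lemma Cap_below (x : R) (alpha beta : Rbar) : Rbar_lt alpha beta -> Rbar_le x alpha ->
  Cap x alpha beta = real alpha.
Proof.
  intros Hab Hx; destruct (Cap_cases x alpha beta Hab) as [[_ E]|[[H _]|[[H _] ->]]].
  - symmetry; exact (f_equal real E).
  - exfalso; apply (Rbar_lt_not_le _ _ (Rbar_lt_trans _ _ _ Hab H) Hx).
  - destruct alpha as [a| |]; cbn in *; [f_equal; lra|tauto|tauto].
Qed.

Lemma Cap_above (x : R) (alpha beta : Rbar) : Rbar_lt alpha beta -> Rbar_le beta x ->
  Cap x alpha beta = real beta.
Proof.
  intros Hab Hx; destruct (Cap_cases x alpha beta Hab) as [[H _]|[[_ E]|[[_ H] ->]]].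
  - exfalso; apply (Rbar_lt_not_le _ _ (Rbar_lt_trans _ _ _ H Hab) Hx).
  - symmetry; exact (f_equal real E).
  - destruct beta as [c| |]; cbn in *; [f_equal; lra|tauto|tauto].
Qed.

Lemma Cap_lt (x : R) (alpha beta : Rbar) : Rbar_lt alpha beta -> x < Cap x alpha beta ->
  alpha = Cap x alpha beta.
Proof.
  intros Hab Hx; destruct (Cap_cases x alpha beta Hab) as [[_ E]|[[H E]|[_ E]]];
    [exact E| |lra].
  rewrite E in H; cbn in H; lra.
Qed.

Lemma Cap_gt (x : R) (alpha beta : Rbar) : Rbar_lt alpha beta -> Cap x alpha beta < x ->
  beta = Cap x alpha beta.
Proof.
  intros Hab Hx; destruct (Cap_cases x alpha beta Hab) as [[H E]|[[_ E]|[_ E]]];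
    [|exact E|lra].
  rewrite E in H; cbn in H; lra.
Qed.

Lemma Cap_lipschitz (x y : R) (alpha beta : Rbar) : Rbar_lt alpha beta ->
  Rabs (Cap x alpha beta - Cap y alpha beta) <= Rabs (x - y).
Proof.
  intros Hab; unfold Cap.
  destruct (Rbar_lt_dec x alpha); destruct (Rbar_lt_dec beta x);
    destruct (Rbar_lt_dec y alpha); destruct (Rbar_lt_dec beta y);
    destruct alpha as [a| |]; destruct beta as [c| |]; cbn in *; try tauto;
    unfold Rabs; repeat destruct Rcase_abs; lra.
Qed.

Lemma lambda_star_Cap (eta sigma rho b : R) (alpha beta : Rbar) (x : R) :
  0 < sigma -> b < 1 -> Rbar_lt alpha beta ->
  / (1 - b) * (eta + lambda_star eta sigma rho b alpha beta x + sigma * rho * x)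
  = Cap ((eta + sigma * rho * x) / (1 - b)) alpha beta.
Proof.
  intros Hs Hb Hab; unfold lambda_star, Cap.
  replace (sigma * rho * x) with (sigma * (rho * x)) by ring.
  destruct (Rbar_lt_dec (rho * x) (Bminus eta sigma b alpha)) as [H1|H1];
    rewrite lt_Bminus_iff in H1 by assumption;
    destruct (Rbar_lt_dec (Bplus eta sigma b beta) (rho * x)) as [H2|H2];
    rewrite Bplus_lt_iff in H2 by assumption;
    destruct (Rbar_lt_dec ((eta + sigma * (rho * x)) / (1 - b)) alpha); try tauto;
    destruct (Rbar_lt_dec beta ((eta + sigma * (rho * x)) / (1 - b))); try tauto;
    destruct alpha as [a| |]; destruct beta as [c| |]; cbn in *; try tauto; try lra;
    field; lra.
Qed.

Lemma deltaK_ge (alpha beta : Rbar) (a l : R) : in_K alpha beta a ->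
  Rbar_le (- a * l) (deltaK alpha beta l).
Proof.
  intros [Ha Hb]; unfold deltaK.
  destruct (Rlt_dec 0 l) as [Hl|Hl]; destruct (Rlt_dec l 0) as [Hl'|Hl']; try lra.
  - rewrite Rbar_plus_0_r, Rbar_mult_pos_r by lra.
    destruct alpha as [a0| |]; cbn in *; [nra|tauto|trivial].
  - rewrite Rbar_plus_0_l, Rbar_mult_neg_r by lra.
    destruct beta as [c| |]; cbn in *; [nra|trivial|tauto].
  - replace l with 0 by lra; cbn; lra.
Qed.

Lemma deltaK_eq (alpha beta : Rbar) (a l : R) :
  (0 < l -> alpha = a) -> (l < 0 -> beta = a) -> deltaK alpha beta l = - a * l.
Proof.
  intros H1 H2; unfold deltaK.
  destruct (Rlt_dec 0 l) as [Hl|Hl]; destruct (Rlt_dec l 0) as [Hl'|Hl']; try lra;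
    [rewrite (H1 Hl)|rewrite (H2 Hl')|replace l with 0 by lra]; cbn; f_equal; ring.
Qed.

Lemma objK_ge (eta sigma rho b : R) (alpha beta : Rbar) (a B l : R) :
  b < 1 -> in_K alpha beta a ->
  Rbar_le (2 * (1 - b) * (- a * l) + (eta + l + sigma * rho * B) ^ 2)
          (objK eta sigma rho b alpha beta B l).
Proof.
  intros Hb Ha; unfold objK.
  pose proof (deltaK_ge alpha beta a l Ha) as H.
  destruct (deltaK alpha beta l) as [d| |]; [cbn in *; nra| |contradiction].
  rewrite Rbar_mult_comm, Rbar_mult_pos_r by lra; exact I.
Qed.

Lemma infK_eq (eta sigma rho b : R) (alpha beta : Rbar) (B : R) :
  b < 1 -> Rbar_lt alpha beta ->
  infK eta sigma rho b alpha beta B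
  = (eta + sigma * rho * B) ^ 2
    - (eta + sigma * rho * B
       - (1 - b) * Cap ((eta + sigma * rho * B) / (1 - b)) alpha beta) ^ 2.
Proof.
  intros Hb Hab; unfold infK.
  set (y := eta + sigma * rho * B); set (a := Cap (y / (1 - b)) alpha beta).
  apply Rbar_is_glb_unique; split.
  - intros z [l ->].
    eapply Rbar_le_trans; [|apply (objK_ge _ _ _ _ _ _ a); [exact Hb|apply Cap_in_K, Hab]].
    cbn [Rbar_le]; fold y.
    replace (2 * (1 - b) * (- a * l) + (eta + l + sigma * rho * B) ^ 2)
      with (y ^ 2 - (y - (1 - b) * a) ^ 2 + (y + l - (1 - b) * a) ^ 2) by (unfold y; ring).
    pose proof (pow2_ge_0 (y + l - (1 - b) * a)); lra.
  - intros m Hm; apply Hm; exists ((1 - b) * a - y).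
    assert (Hy : y / (1 - b) - a = - (((1 - b) * a - y) / (1 - b))) by (field; lra).
    unfold objK; rewrite (deltaK_eq alpha beta a).
    + cbn [Rbar_mult Rbar_mult' Rbar_plus Rbar_plus']; f_equal; unfold y; ring.
    + intros Hl; apply Cap_lt; [exact Hab|].
      assert (0 < ((1 - b) * a - y) / (1 - b)) by (apply Rdiv_lt_0_compat; lra); fold a; lra.
    + intros Hl; apply Cap_gt; [exact Hab|].
      assert (((1 - b) * a - y) / (1 - b) < 0) by (apply Rdiv_neg_pos; lra); fold a; lra.
Qed.

Lemma rhsK_eq (eta kappa sigma rho b : R) (alpha beta : Rbar) (B : R) :
  b < 1 -> Rbar_lt alpha beta ->
  rhsK eta kappa sigma rho b alpha beta B
  = rhsU eta kappa sigma rho b B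
    - b / (2 * (1 - b))
      * (eta + sigma * rho * B
         - (1 - b) * Cap ((eta + sigma * rho * B) / (1 - b)) alpha beta) ^ 2.
Proof.
  intros Hb Hab; unfold rhsK, rhsU, r0, r1, r2.
  rewrite infK_eq by assumption; cbn [real]; field; lra.
Qed.

Definition clamp (a b x : R) : R := Rmax a (Rmin b x).

Lemma clamp_id (a b x : R) : a <= x <= b -> clamp a b x = x.
Proof. intros Hx; unfold clamp, Rmax, Rmin; repeat destruct Rle_dec; lra. Qed.

Lemma continuity_pt_comp_clamp (f : R -> R) (a b : R) : a <= b ->
  continuous_on (fun t => a <= t <= b) f ->
  forall x, continuity_pt (fun t => f (clamp a b t)) x.
Proof.
  intros Hab Hf x; apply continuity_pt_filterlim.
  assert (Hin : forall t, a <= clamp a b t <= b)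
    by (intros t; unfold clamp, Rmax, Rmin; repeat destruct Rle_dec; lra).
  apply (filterlim_comp _ _ _ (clamp a b) f _
           (within (fun t => a <= t <= b) (locally (clamp a b x)))); [|apply Hf, Hin].
  intros P [eps HP]; exists eps; intros t Ht; apply HP; [|apply Hin].
  assert (Rabs (clamp a b t - clamp a b x) <= Rabs (t - x))
    by (unfold clamp, Rmax, Rmin; repeat destruct Rle_dec; unfold Rabs;
        repeat destruct Rcase_abs; lra).
  change (Rabs (clamp a b t - clamp a b x) < eps); change (Rabs (t - x) < eps) in Ht; lra.
Qed.

Lemma is_derive_comp_clamp (f : R -> R) (a b s l : R) : a < s < b -> is_derive f s l ->
  is_derive (fun t => f (clamp a b t)) s l.
Proof.
  intros Hs Hf; apply (is_derive_ext_loc f); [|exact Hf].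
  assert (Hd : 0 < Rmin (s - a) (b - s)) by (apply Rmin_pos; lra).
  exists (mkposreal _ Hd); intros t Ht; change (Rabs (t - s) < Rmin (s - a) (b - s)) in Ht.
  rewrite clamp_id; [reflexivity|].
  pose proof (Rmin_l (s - a) (b - s)); pose proof (Rmin_r (s - a) (b - s)).
  apply Rabs_def2 in Ht; lra.
Qed.

Lemma continuity_pt_Rbar_lt (h : R -> R) (x : R) (c : Rbar) :
  continuity_pt h x -> Rbar_lt (h x) c ->
  exists d, 0 < d /\ forall y, Rabs (y - x) < d -> Rbar_lt (h y) c.
Proof.
  intros Hh Hc.
  destruct (locally_pt_comp _ h x (open_Rbar_lt c (h x) Hc) Hh) as [d Hd].
  exists d; split; [apply cond_pos|]; intros y Hy; exact (Hd y Hy).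
Qed.

Lemma continuity_pt_Rbar_gt (h : R -> R) (x : R) (c : Rbar) :
  continuity_pt h x -> Rbar_lt c (h x) ->
  exists d, 0 < d /\ forall y, Rabs (y - x) < d -> Rbar_lt c (h y).
Proof.
  intros Hh Hc.
  destruct (locally_pt_comp _ h x (open_Rbar_gt c (h x) Hc) Hh) as [d Hd].
  exists d; split; [apply cond_pos|]; intros y Hy; exact (Hd y Hy).
Qed.

Lemma in_K_closed (alpha beta : Rbar) (h : R -> R) (x : R) : continuity_pt h x ->
  (forall d, 0 < d -> exists y, Rabs (y - x) < d /\ in_K alpha beta (h y)) ->
  in_K alpha beta (h x).
Proof.
  intros Hh Hnear; split; apply Rbar_not_lt_le; intros Hout.
  - destruct (continuity_pt_Rbar_lt h x alpha Hh Hout) as [d [Hd Hd']].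
    destruct (Hnear d Hd) as [y [Hy [HKy _]]].
    exact (Rbar_lt_not_le _ _ (Hd' y Hy) HKy).
  - destruct (continuity_pt_Rbar_gt h x beta Hh Hout) as [d [Hd Hd']].
    destruct (Hnear d Hd) as [y [Hy [_ HKy]]].
    exact (Rbar_lt_not_le _ _ (Hd' y Hy) HKy).
Qed.

Lemma exit_time (alpha beta : Rbar) (h : R -> R) (a b : R) :
  a <= b -> (forall x, continuity_pt h x) -> in_K alpha beta (h a) ->
  exists s, a <= s <= b /\ (forall u, a <= u <= s -> in_K alpha beta (h u)) /\
    (s < b -> forall d, 0 < d -> exists u, s < u < s + d /\ u <= b /\ ~ in_K alpha beta (h u)).
Proof.
  intros Hab Hh Ha.
  set (S t := a <= t <= b /\ forall u, a <= u <= t -> in_K alpha beta (h u)).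
  assert (HSa : S a) by (split; [lra|]; intros u Hu; replace u with a by lra; exact Ha).
  destruct (completeness S) as [s [Hub Hlub]];
    [exists b; intros t [Ht _]; lra|exists a; exact HSa|].
  assert (Has : a <= s) by exact (Hub a HSa).
  assert (Hsb : s <= b) by (apply Hlub; intros t [Ht _]; lra).
  assert (Hbefore : forall u, a <= u < s -> in_K alpha beta (h u)).
  { intros u Hu; apply NNPP; intros Hout.
    enough (s <= u) by lra.
    apply Hlub; intros t [Ht Hin]; apply Rnot_lt_le; intros Hut; apply Hout, Hin; lra. }
  assert (Hupto : forall u, a <= u <= s -> in_K alpha beta (h u)).
  { intros u Hu; destruct (Rlt_le_dec u s) as [Hus|Hsu]; [apply Hbefore; lra|].
    replace u with s by lra.
    destruct (Req_dec a s) as [<-|Has']; [exact Ha|].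
    apply in_K_closed; [apply Hh|]; intros d Hd.
    exists (Rmax a (s - d / 2)); split.
    - apply Rabs_def1; unfold Rmax; destruct Rle_dec; lra.
    - apply Hbefore; unfold Rmax; destruct Rle_dec; lra. }
  exists s; split; [lra|]; split; [exact Hupto|].
  intros Hsb' d Hd; apply NNPP; intros Hstay.
  set (t := Rmin (s + d / 2) b).
  assert (Hst : s < t) by (apply Rmin_glb_lt; lra).
  assert (Htd : t <= s + d / 2) by apply Rmin_l.
  assert (Htb : t <= b) by apply Rmin_r.
  enough (t <= s) by lra.
  apply Hub; split; [lra|].
  intros u Hu; destruct (Rle_lt_dec u s); [apply Hupto; lra|].
  apply NNPP; intros Hout; apply Hstay; exists u.
  repeat split; try lra; exact Hout.
Qed.

Section Autonomous_ODE.

Variables (h F : R -> R) (a b : R).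
Hypothesis h_cont : forall x, continuity_pt h x.
Hypothesis h_ode : forall s, a < s < b -> is_derive h s (F (h s)).

Lemma ode_increases_after (r : R) : a <= r -> continuity_pt F (h r) -> 0 < F (h r) ->
  exists d, 0 < d /\ forall u, r < u < r + d -> u <= b -> h r < h u.
Proof.
  intros Har HF HFr.
  destruct (continuity_pt_Rbar_gt (fun s => F (h s)) r 0
              (continuity_pt_comp h F r (h_cont r) HF) HFr) as [d [Hd Hpos]].
  exists d; split; [exact Hd|]; intros u Hu Hub.
  destruct (MVT_gen h r u (fun s => F (h s))) as [c [Hc Hmvt]].
  - intros t Ht; rewrite Rmin_left, Rmax_right in Ht by lra; apply h_ode; lra.
  - intros t _; apply h_cont.
  - rewrite Rmin_left, Rmax_right in Hc by lra.
    assert (0 < F (h c)) by (apply (Hpos c), Rabs_def1; lra).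
    nra.
Qed.

Lemma ode_stays_above (r e : R) : continuity_pt F e -> 0 < F e -> a <= r <= b -> h r = e ->
  forall s, r <= s <= b -> e <= h s.
Proof.
  intros HF HFe Hr Hhr s Hs.
  destruct (exit_time (Finite e) p_infty h r b) as [m [Hm [Hin Hexit]]];
    [lra|exact h_cont|split; [cbn; lra|exact I]|].
  destruct (Rle_lt_dec s m) as [Hsm|Hms]; [exact (proj1 (Hin s ltac:(lra)))|exfalso].
  assert (Hafter : exists d, 0 < d /\ forall u, m < u < m + d -> u <= b -> e < h u).
  { destruct (Rle_lt_or_eq_dec e (h m) (proj1 (Hin m ltac:(lra)))) as [Hgt|Heq].
    - destruct (continuity_pt_Rbar_gt h m e (h_cont m) Hgt) as [d [Hd Hnear]].
      exists d; split; [exact Hd|]; intros u Hu _; apply (Hnear u), Rabs_def1; lra.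
    - rewrite Heq in HF, HFe.
      destruct (ode_increases_after m) as [d [Hd Hup]]; [lra|exact HF|exact HFe|].
      exists d; split; [exact Hd|]; intros u Hu Hub; rewrite Heq; exact (Hup u Hu Hub). }
  destruct Hafter as [d [Hd Hafter]].
  destruct (Hexit ltac:(lra) d Hd) as [u [Hu [Hub Hout]]].
  apply Hout; split; [apply Rlt_le, (Hafter u Hu Hub)|exact I].
Qed.

End Autonomous_ODE.

Lemma ode_stays_below (h F : R -> R) (a b r e : R) :
  (forall x, continuity_pt h x) -> (forall s, a < s < b -> is_derive h s (F (h s))) ->
  continuity_pt F e -> F e < 0 -> a <= r <= b -> h r = e ->
  forall s, r <= s <= b -> h s <= e.
Proof.
  intros Hh Hode HF HFe Hr Hhr s Hs.
  enough (- e <= - h s) by lra.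
  refine (ode_stays_above (fun x => - h x) (fun y => - F (- y)) a b _ _ r (- e) _ _ Hr _ s Hs).
  - intros x; apply continuity_pt_opp, Hh.
  - intros t Ht; rewrite Ropp_involutive; exact (is_derive_opp _ _ _ (Hode t Ht)).
  - apply continuity_pt_opp, (continuity_pt_comp Ropp F).
    + apply continuity_pt_opp, continuity_pt_id.
    + rewrite Ropp_involutive; exact HF.
  - rewrite Ropp_involutive; lra.
  - rewrite Hhr; reflexivity.
Qed.

Lemma nonincreasing_of_derive_nonpos (f df : R -> R) (x y : R) : x <= y ->
  (forall t, x <= t <= y -> continuity_pt f t) ->
  (forall t, x < t < y -> is_derive f t (df t)) ->
  (forall t, x <= t <= y -> df t <= 0) -> f y <= f x.
Proof.
  intros Hxy Hc Hd Hneg.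
  destruct (MVT_gen f x y df) as [c [Hcxy Hmvt]].
  - intros t Ht; rewrite Rmin_left, Rmax_right in Ht by lra; apply Hd, Ht.
  - intros t Ht; rewrite Rmin_left, Rmax_right in Ht by lra; apply Hc, Ht.
  - rewrite Rmin_left, Rmax_right in Hcxy by lra.
    pose proof (Hneg c Hcxy); nra.
Qed.

Lemma continuity_pt_weighted_square (D : R -> R) (k t : R) : continuity_pt D t ->
  continuity_pt (fun s => D s ^ 2 * exp (k * s)) t.
Proof.
  intros HD; apply continuity_pt_mult.
  - apply (continuity_pt_comp D (fun z => z ^ 2)); [exact HD|].
    apply derivable_continuous_pt, derivable_pt_pow.
  - apply (continuity_pt_comp (fun s => k * s) exp);
      [|apply derivable_continuous_pt, derivable_pt_exp].
    apply continuity_pt_mult; [apply continuity_pt_const; intros ? ?; reflexivity|].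
    apply continuity_pt_id.
Qed.

Lemma is_derive_weighted_square (D : R -> R) (k t d : R) : is_derive D t d ->
  is_derive (fun s => D s ^ 2 * exp (k * s)) t (exp (k * t) * (2 * D t * d + k * D t ^ 2)).
Proof.
  intros HD; auto_derive; [exists d; exact HD|].
  replace (Derive (fun x => D x) t) with d by (symmetry; apply is_derive_unique, HD).
  ring.
Qed.

Lemma gronwall_zero (D dD : R -> R) (L a b c : R) :
  (forall t, continuity_pt D t) ->
  (forall s, a < s < b -> is_derive D s (dD s)) ->
  (forall s, a <= s <= b -> Rabs (dD s) <= L * Rabs (D s)) ->
  a <= c <= b -> D c = 0 -> forall s, a <= s <= b -> D s = 0.
Proof.
  intros Hc Hd Hbound Hcab Hc0 s Hs.
  (* D^2 e^(-2Lt) is nonincreasing on [c, b] and D^2 e^(2Lt) nondecreasing on [a, c] *)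
  assert (Hkey : forall t, a <= t <= b -> Rabs (2 * D t * dD t) <= 2 * L * D t ^ 2).
  { intros t Ht; pose proof (Hbound t Ht); pose proof (Rabs_pos (D t)).
    rewrite !Rabs_mult, (Rabs_right 2), <- pow2_abs by lra; nra. }
  assert (Hzero : forall k, D s ^ 2 * exp (k * s) <= D c ^ 2 * exp (k * c) -> D s = 0).
  { intros k H; rewrite Hc0 in H; pose proof (exp_pos (k * s)).
    assert (D s ^ 2 <= 0) by nra; nra. }
  destruct (Rle_lt_dec c s) as [Hcs|Hsc].
  - apply (Hzero (- (2 * L))).
    apply (nonincreasing_of_derive_nonpos (fun t => D t ^ 2 * exp (- (2 * L) * t))
             (fun t => exp (- (2 * L) * t) * (2 * D t * dD t + - (2 * L) * D t ^ 2)));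
      [lra|intros; apply continuity_pt_weighted_square, Hc
          |intros t Ht; apply is_derive_weighted_square, Hd; lra|].
    intros t Ht; pose proof (Hkey t ltac:(lra)); pose proof (Rle_abs (2 * D t * dD t)).
    pose proof (exp_pos (- (2 * L) * t)); nra.
  - apply (Hzero (2 * L)).
    enough (- (D c ^ 2 * exp (2 * L * c)) <= - (D s ^ 2 * exp (2 * L * s))) by lra.
    apply (nonincreasing_of_derive_nonpos (fun t => - (D t ^ 2 * exp (2 * L * t)))
             (fun t => - (exp (2 * L * t) * (2 * D t * dD t + 2 * L * D t ^ 2))));
      [lra|intros; apply continuity_pt_opp, continuity_pt_weighted_square, Hc
          |intros t Ht; apply (is_derive_opp (fun t => D t ^ 2 * exp (2 * L * t)));
           apply is_derive_weighted_square, Hd; lra|].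
    intros t Ht; pose proof (Hkey t ltac:(lra)); pose proof (Rabs_maj2 (2 * D t * dD t)).
    pose proof (exp_pos (2 * L * t)); nra.
Qed.

Definition locally_lipschitz (G : R -> R) : Prop :=
  forall M, exists L, forall x y, Rabs x <= M -> Rabs y <= M ->
    Rabs (G x - G y) <= L * Rabs (x - y).

Lemma quadratic_locally_lipschitz (G : R -> R) (c0 c1 c2 : R) :
  (forall x, G x = c0 + c1 * x + c2 * x ^ 2) -> locally_lipschitz G.
Proof.
  intros HG M; exists (Rabs c1 + Rabs c2 * (2 * M)); intros x y Hx Hy.
  replace (G x - G y) with ((c1 + c2 * (x + y)) * (x - y)) by (rewrite !HG; ring).
  rewrite Rabs_mult; apply Rmult_le_compat_r; [apply Rabs_pos|].
  eapply Rle_trans; [apply Rabs_triang|]; apply Rplus_le_compat_l.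
  rewrite Rabs_mult; apply Rmult_le_compat_l; [apply Rabs_pos|].
  pose proof (Rabs_triang x y); lra.
Qed.

Lemma locally_lipschitz_continuity_pt (G : R -> R) (x : R) :
  locally_lipschitz G -> continuity_pt G x.
Proof.
  intros HG eps Heps; destruct (HG (Rabs x + 1)) as [L HL].
  assert (HL1 : 0 < Rabs L + 1) by (pose proof (Rabs_pos L); lra).
  exists (Rmin 1 (eps / (Rabs L + 1))); split;
    [apply Rmin_pos; [lra|apply Rdiv_lt_0_compat; lra]|].
  intros y [_ Hy]; cbn in Hy |- *; unfold R_dist in Hy |- *.
  pose proof (Rmin_l 1 (eps / (Rabs L + 1))); pose proof (Rmin_r 1 (eps / (Rabs L + 1))).
  eapply Rle_lt_trans; [apply HL; [|lra]|].
  - replace y with (x + (y - x)) by ring; pose proof (Rabs_triang x (y - x)); lra.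
  - assert (Rabs (y - x) * (Rabs L + 1) < eps).
    { apply (Rmult_lt_compat_r (Rabs L + 1)) in Hy; [|lra].
      assert (eps / (Rabs L + 1) * (Rabs L + 1) = eps) by (field; lra).
      nra. }
    pose proof (Rle_abs L); pose proof (Rabs_pos (y - x)); nra.
Qed.

Lemma ode_unique (G : R -> R) (a b c : R) (p q : R -> R) :
  locally_lipschitz G ->
  (forall x, continuity_pt p x) -> (forall x, continuity_pt q x) ->
  (forall s, a < s < b -> is_derive p s (G (p s))) ->
  (forall s, a < s < b -> is_derive q s (G (q s))) ->
  a <= c <= b -> p c = q c -> forall s, a <= s <= b -> p s = q s.
Proof.
  intros HG Hp Hq Hpd Hqd Hc Hpq s Hs.
  destruct (bounded_continuity p a b) as [Mp HMp];
    [intros x _; apply continuity_pt_filterlim, Hp|].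
  destruct (bounded_continuity q a b) as [Mq HMq];
    [intros x _; apply continuity_pt_filterlim, Hq|].
  destruct (HG (Rmax Mp Mq)) as [L HL].
  enough (p s - q s = 0) by lra.
  apply (gronwall_zero (fun t => p t - q t) (fun t => G (p t) - G (q t)) L a b c);
    [intros; apply continuity_pt_minus; auto
    |intros t Ht; apply (is_derive_minus p q); auto
    | |exact Hc|lra|exact Hs].
  intros t Ht; apply HL.
  - pose proof (HMp t Ht) as Hpt; change (Rabs (p t) < Mp) in Hpt.
    pose proof (Rmax_l Mp Mq); lra.
  - pose proof (HMq t Ht) as Hqt; change (Rabs (q t) < Mq) in Hqt.
    pose proof (Rmax_r Mp Mq); lra.
Qed.

Section Cap_comparison.

Variables (T : R) (alpha beta : Rbar) (G1 G2 p q : R -> R).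
Hypothesis HT : 0 <= T.
Hypothesis Hab : Rbar_lt alpha beta.
Hypothesis p_cont : forall x, continuity_pt p x.
Hypothesis q_cont : forall x, continuity_pt q x.
Hypothesis p_ode : forall s, 0 < s < T -> is_derive p s (G1 (p s)).
Hypothesis q_ode : forall s, 0 < s < T -> is_derive q s (G2 (q s)).
Hypothesis G1_cont : forall x, continuity_pt G1 x.
Hypothesis G2_lipschitz : locally_lipschitz G2.
Hypothesis G1_eq_G2 : forall x, in_K alpha beta x -> G1 x = G2 x.

Lemma Cap_eq_after_exit (m : R) : 0 <= m < T -> p m = q m -> in_K alpha beta (p m) ->
  G2 (p m) <> 0 ->
  (forall d, 0 < d -> exists u, m < u < m + d /\ u <= T /\ ~ in_K alpha beta (p u)) ->
  forall s, m <= s <= T -> Cap (p s) alpha beta = Cap (q s) alpha beta.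
Proof.
  intros Hm Hpq He HG2e Hexit s Hs.
  set (e := p m) in *.
  assert (HG1e : G1 e = G2 e) by (apply G1_eq_G2, He).
  assert (HG2c : continuity_pt G2 e) by (apply locally_lipschitz_continuity_pt, G2_lipschitz).
  destruct (Rdichotomy _ _ HG2e) as [Hneg|Hpos].
  - assert (Hp : forall u, m <= u <= T -> p u <= e)
      by (apply (ode_stays_below p G1 0 T); auto; lra).
    assert (Hq : forall u, m <= u <= T -> q u <= e)
      by (apply (ode_stays_below q G2 0 T); auto; lra).
    assert (Halpha : Rbar_le e alpha).
    { apply Rbar_not_lt_le; intros Hlt.
      destruct (continuity_pt_Rbar_gt p m alpha (p_cont m) Hlt) as [d [Hd Hnear]].
      destruct (Hexit d Hd) as [u [Hu [HuT Hout]]]; apply Hout; split.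
      - apply Rbar_lt_le, Hnear, Rabs_def1; lra.
      - apply Rbar_le_trans with e; [apply Hp; lra|apply He]. }
    rewrite (Cap_below (p s)), (Cap_below (q s)); try exact Hab; [reflexivity| |];
      [exact (Rbar_le_trans (q s) e alpha (Hq s Hs) Halpha)
      |exact (Rbar_le_trans (p s) e alpha (Hp s Hs) Halpha)].
  - assert (Hp : forall u, m <= u <= T -> e <= p u)
      by (apply (ode_stays_above p G1 0 T); auto; lra).
    assert (Hq : forall u, m <= u <= T -> e <= q u)
      by (apply (ode_stays_above q G2 0 T); auto; lra).
    assert (Hbeta : Rbar_le beta e).
    { apply Rbar_not_lt_le; intros Hlt.
      destruct (continuity_pt_Rbar_lt p m beta (p_cont m) Hlt) as [d [Hd Hnear]].
      destruct (Hexit d Hd) as [u [Hu [HuT Hout]]]; apply Hout; split.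
      - apply Rbar_le_trans with e; [apply He|apply Hp; lra].
      - apply Rbar_lt_le, Hnear, Rabs_def1; lra. }
    rewrite (Cap_above (p s)), (Cap_above (q s)); try exact Hab; [reflexivity| |];
      [exact (Rbar_le_trans beta e (q s) Hbeta (Hq s Hs))
      |exact (Rbar_le_trans beta e (p s) Hbeta (Hp s Hs))].
Qed.

Lemma Cap_comparison : p 0 = q 0 -> in_K alpha beta (p 0) -> G2 (p 0) <> 0 ->
  forall s, 0 <= s <= T -> Cap (p s) alpha beta = Cap (q s) alpha beta.
Proof.
  intros Hpq0 Hp0 HG0 s Hs.
  destruct (exit_time alpha beta p 0 T HT p_cont Hp0) as [m [Hm [HinK Hexit]]].
  assert (Hagree : forall u, 0 <= u <= m -> p u = q u).
  { apply (ode_unique G2 0 m 0); auto; try lra.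
    - intros u Hu; rewrite <- G1_eq_G2 by (apply HinK; lra); apply p_ode; lra.
    - intros u Hu; apply q_ode; lra. }
  destruct (Rle_lt_dec s m) as [Hsm|Hms]; [rewrite Hagree by lra; reflexivity|].
  apply (Cap_eq_after_exit m); try lra.
  - apply Hagree; lra.
  - apply HinK; lra.
  - (* an equilibrium reached in finite time would have been the initial value *)
    intros Hzero; apply HG0; rewrite Hpq0.
    replace (q 0) with (p m); [exact Hzero|].
    rewrite (Hagree m) by lra.
    apply (ode_unique G2 0 m m (fun _ => q m) q); auto; try lra.
    + intros; apply continuity_pt_const; intros ? ?; reflexivity.
    + intros u Hu; rewrite <- (Hagree m), Hzero by lra; exact (is_derive_const _ _).
    + intros u Hu; apply q_ode; lra.
  - apply Hexit; lra.
Qed.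

End Cap_comparison.

Lemma solves_ODE_affine (T c m : R) (F f : R -> R) : 0 <= T -> m <> 0 ->
  solves_ODE T F f ->
  (forall x, continuity_pt (fun t => c + m * f (clamp 0 T t)) x) /\
  (forall s, 0 < s < T -> is_derive (fun t => c + m * f (clamp 0 T t)) s
                             (m * F ((c + m * f (clamp 0 T s) - c) / m))).
Proof.
  intros HT Hm [_ [Hc Hd]]; split.
  - intros x; apply continuity_pt_plus; [apply continuity_pt_const; intros ? ?; reflexivity|].
    apply continuity_pt_mult; [apply continuity_pt_const; intros ? ?; reflexivity|].
    apply continuity_pt_comp_clamp; assumption.
  - intros s Hs.
    replace ((c + m * f (clamp 0 T s) - c) / m) with (f s)
      by (rewrite clamp_id by lra; field; exact Hm).
    pose proof (is_derive_plus (fun _ => c) _ s _ _ (is_derive_const c s)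
                  (is_derive_scal _ s m _ (is_derive_comp_clamp f 0 T s _ Hs (Hd s Hs)))) as Hg.
    rewrite plus_zero_l in Hg; exact Hg.
Qed.

(* The field of the ODE solved by the price [pi_M + sigma rho / (1 - b) * B] when [B' = F B]. *)
Definition price_rhs (eta sigma rho b : R) (F : R -> R) (y : R) : R :=
  sigma * rho / (1 - b) * F ((y - pi_M eta b) / (sigma * rho / (1 - b))).

Lemma price_rhs_rhsK (eta kappa sigma rho b : R) (alpha beta : Rbar) (y : R) :
  0 < sigma -> rho <> 0 -> b < 1 -> Rbar_lt alpha beta ->
  price_rhs eta sigma rho b (rhsK eta kappa sigma rho b alpha beta) y
  = price_rhs eta sigma rho b (rhsU eta kappa sigma rho b) y
    - sigma * rho * b / 2 * (y - Cap y alpha beta) ^ 2.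
Proof.
  intros Hsigma Hrho Hb Hab; unfold price_rhs, pi_M; rewrite rhsK_eq by assumption.
  set (B := (y - eta / (1 - b)) / (sigma * rho / (1 - b))).
  replace ((eta + sigma * rho * B) / (1 - b)) with y
    by (unfold B; field; repeat split; (lra || assumption)).
  unfold B; field; repeat split; (lra || assumption).
Qed.

Lemma price_rhs_rhsU_locally_lipschitz (eta kappa sigma rho b : R) :
  0 < sigma -> rho <> 0 -> b < 1 ->
  locally_lipschitz (price_rhs eta sigma rho b (rhsU eta kappa sigma rho b)).
Proof.
  intros Hsigma Hrho Hb.
  set (m := sigma * rho / (1 - b)); set (c := pi_M eta b).
  apply (quadratic_locally_lipschitz _
           (m * - r0 eta b - r1 eta kappa sigma rho b * c + r2 sigma rho b * c ^ 2 / (2 * m))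
           (r1 eta kappa sigma rho b - r2 sigma rho b * c / m) (r2 sigma rho b / (2 * m))).
  intros y; unfold price_rhs, rhsU; fold m c.
  unfold m; field; repeat split; (lra || assumption).
Qed.

Lemma price_rhs_rhsU_pi_M (eta kappa sigma rho b : R) :
  0 < sigma -> rho <> 0 -> b < 1 ->
  price_rhs eta sigma rho b (rhsU eta kappa sigma rho b) (pi_M eta b)
  = sigma * rho * b * eta ^ 2 / (2 * (1 - b) ^ 2).
Proof.
  intros Hsigma Hrho Hb; unfold price_rhs, rhsU, r0, r1, r2.
  rewrite Rminus_diag, Rdiv_0_l; field; lra.
Qed.

Lemma price_rhs_rhsK_continuity_pt (eta kappa sigma rho b : R) (alpha beta : Rbar) (x : R) :
  0 < sigma -> rho <> 0 -> b < 1 -> Rbar_lt alpha beta ->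
  continuity_pt (price_rhs eta sigma rho b (rhsK eta kappa sigma rho b alpha beta)) x.
Proof.
  intros Hsigma Hrho Hb Hab.
  eapply continuity_pt_ext; [intros y; symmetry; apply price_rhs_rhsK; assumption|].
  apply continuity_pt_minus;
    [apply locally_lipschitz_continuity_pt, price_rhs_rhsU_locally_lipschitz; assumption|].
  apply continuity_pt_mult; [apply continuity_pt_const; intros ? ?; reflexivity|].
  apply (continuity_pt_comp (fun y => y - Cap y alpha beta) (fun z => z ^ 2));
    [|apply derivable_continuous_pt, derivable_pt_pow].
  apply continuity_pt_minus; [apply continuity_pt_id|].
  apply locally_lipschitz_continuity_pt; intros M; exists 1; intros y z _ _.
  rewrite Rmult_1_l; apply Cap_lipschitz, Hab.
Qed.

Lemma Cap_constrained_eq_unconstrained (T eta kappa sigma rho b : R) (alpha beta : Rbar)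
  (B Bu : R -> R) :
  0 < T -> 0 < eta -> 0 < sigma -> rho <> 0 -> b < 1 -> b <> 0 -> Rbar_lt alpha beta ->
  solves_ODE T (rhsK eta kappa sigma rho b alpha beta) B ->
  solves_ODE T (rhsU eta kappa sigma rho b) Bu ->
  in_K alpha beta (pi_M eta b) ->
  forall s, 0 <= s <= T ->
  Cap (pi_M eta b + sigma * rho / (1 - b) * B s) alpha beta
  = Cap (pi_M eta b + sigma * rho / (1 - b) * Bu s) alpha beta.
Proof.
  intros HT Heta Hsigma Hrho Hb Hb0 Hab HB HBu HM s Hs.
  set (c := pi_M eta b); set (m := sigma * rho / (1 - b)).
  assert (Hm : m <> 0)
    by (unfold m, Rdiv; repeat apply Rmult_integral_contrapositive_currified;
        try apply Rinv_neq_0_compat; lra).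
  destruct (solves_ODE_affine T c m _ B ltac:(lra) Hm HB) as [HBc HBd].
  destruct (solves_ODE_affine T c m _ Bu ltac:(lra) Hm HBu) as [HUc HUd].
  destruct HB as [HB0 _]; destruct HBu as [HBu0 _].
  rewrite <- (clamp_id 0 T s) by exact Hs.
  apply (Cap_comparison T alpha beta
           (price_rhs eta sigma rho b (rhsK eta kappa sigma rho b alpha beta))
           (price_rhs eta sigma rho b (rhsU eta kappa sigma rho b))
           (fun t => c + m * B (clamp 0 T t)) (fun t => c + m * Bu (clamp 0 T t)));
    auto using price_rhs_rhsK_continuity_pt, price_rhs_rhsU_locally_lipschitz; try lra;
    rewrite ?clamp_id, ?HB0, ?HBu0, ?Rmult_0_r, ?Rplus_0_r by lra; try reflexivity.
  - intros y Hy; rewrite price_rhs_rhsK, Cap_id by assumption; ring.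
  - exact HM.
  - unfold c; rewrite price_rhs_rhsU_pi_M by assumption; unfold Rdiv.
    repeat apply Rmult_integral_contrapositive_currified;
      try apply Rinv_neq_0_compat; try apply Rmult_integral_contrapositive_currified;
      try apply pow_nonzero; lra.
Qed.

Theorem lemma2p9 (T eta kappa sigma rho b : R) (alpha beta : Rbar)
  (B Bu : R -> R) :
  0 < T -> 0 < eta -> 0 < kappa -> 0 < sigma ->
  -1 < rho < 1 -> b < 1 -> b <> 0 ->
  Rbar_lt alpha beta ->
  solves_ODE T (rhsK eta kappa sigma rho b alpha beta) B ->
  solves_ODE T (rhsU eta kappa sigma rho b) Bu ->
  (rho = 0 \/ (Rbar_le alpha (Finite (pi_M eta b)) /\ Rbar_le (Finite (pi_M eta b)) beta)) ->
  forall t, 0 <= t <= T ->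
    pi_star T eta sigma rho b alpha beta B t
    = Cap (pi_u T eta sigma rho b Bu t) alpha beta.
Proof.
  intros HT Heta _ Hsigma _ Hb Hb0 Hab HB HBu Hcase t Ht.
  unfold pi_star, pi_u; rewrite lambda_star_Cap by assumption.
  destruct (Req_dec rho 0) as [->|Hrho]; [f_equal; field; lra|].
  destruct Hcase as [Hrho0|HM]; [contradiction|].
  replace ((eta + sigma * rho * B (T - t)) / (1 - b))
    with (pi_M eta b + sigma * rho / (1 - b) * B (T - t)) by (unfold pi_M; field; lra).
  replace (/ (1 - b) * (eta + sigma * rho * Bu (T - t)))
    with (pi_M eta b + sigma * rho / (1 - b) * Bu (T - t)) by (unfold pi_M; field; lra).
  apply (Cap_constrained_eq_unconstrained T eta kappa); auto; lra.
Qed.
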